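(* Let $t:[0,1]\to[0,\infty]$ and $s:[0,\infty]\to[0,1]$ be continuous and increasing functions such that the function $G_{t,s}:[0,1]^2\to[0,1]$, $G_{t,s}(x,y)=s(t(x)+t(y))$, is a grouping function. Then: (1) $t(x)=\infty$ if and only if $x=1$; (2) $s(x)=1$ if and only if $x=\infty$.
   Context: ''Increasing'' means non-decreasing. Arithmetic in $[0,\infty]$ uses $c+\infty=\infty$; continuity on $[0,\infty]$ refers to the usual topology of the extended half-line. A grouping function is a map $G:[0,1]^2\to[0,1]$ that is (G1) commutative, (G2) $G(x,y)=0$ iff $x=y=0$, (G3) $G(x,y)=1$ iff $x=1$ or $y=1$, (G4) increasing in each variable, (G5) continuous. *)

From HB Require Import structures.
From mathcomp Require Import all_boot all_order all_algebra.
From mathcomp Require Import all_classical all_reals all_analysis.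
Set Implicit Arguments. Unset Strict Implicit. Unset Printing Implicit Defensive.
Import Order.TTheory GRing.Theory Num.Theory.
Import numFieldNormedType.Exports.
Local Open Scope classical_set_scope.
Local Open Scope ring_scope.

Definition unit_square (R : realType) : set (R * R) :=
  [set p | (0 <= p.1 <= 1) /\ (0 <= p.2 <= 1)].

(* Grouping function G : [0,1]^2 -> [0,1], represented by a total function
   R -> R -> R whose behaviour is only constrained on [0,1]^2. *)
Definition grouping_function (R : realType) (G : R -> R -> R) : Prop :=
  (forall x y, 0 <= x <= 1 -> 0 <= y <= 1 -> 0 <= G x y <= 1) /\
  (forall x y, 0 <= x <= 1 -> 0 <= y <= 1 -> G x y = G y x) /\
  (forall x y, 0 <= x <= 1 -> 0 <= y <= 1 -> (G x y = 0 <-> (x = 0 /\ y = 0))) /\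
  (forall x y, 0 <= x <= 1 -> 0 <= y <= 1 -> (G x y = 1 <-> (x = 1 \/ y = 1))) /\
  (forall x x' y, 0 <= x <= 1 -> 0 <= x' <= 1 -> 0 <= y <= 1 ->
      x <= x' -> G x y <= G x' y) /\
  (forall x y y', 0 <= x <= 1 -> 0 <= y <= 1 -> 0 <= y' <= 1 ->
      y <= y' -> G x y <= G x y') /\
  {within (@unit_square R), continuous (fun p : R * R => G p.1 p.2)}.

(* As G(0,0) = 0 <> 1 = G(1,0), t(0) is finite, and t(0) < t(1/2) because
   G(1/2,0) <> 0.  If t(1) were finite, continuity of t at 1 would give x < 1
   with t(x) + t(1/2) >= t(1) + t(0), hence G(x,1/2) >= G(1,0) = 1, against
   (G3).  So t(1) = oo and s(oo) = G(1,0) = 1.  Conversely t(x) = oo forces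
   G(x,0) = 1, i.e. x = 1; and s(c) = 1 for a finite c is impossible, since
   t(x) > c for some x < 1, whence 1 = s(c) <= G(x,0) < 1. *)

From HB Require Import structures.
From mathcomp Require Import all_boot all_order all_algebra.
From mathcomp Require Import all_classical all_reals all_analysis.
From mathcomp Require Import lra.
Set Implicit Arguments. Unset Strict Implicit. Unset Printing Implicit Defensive.

Import Order.TTheory GRing.Theory Num.Theory.
Import numFieldNormedType.Exports.
Local Open Scope classical_set_scope.
Local Open Scope ring_scope.

Lemma continuous_within_itvcc_left (R : realType) (T : topologicalType)
    (f : R -> T) (a b : R) (P : set T) :
  a < b -> {within [set x | a <= x <= b], continuous f} ->
  nbhs (f b) P -> exists2 x, a <= x < b & P (f x).
Proof.
move=> ab f_cont Pfb.
have bA : a <= b <= b by rewrite lexx ltW.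
have := f_cont b P Pfb; rewrite /= /nbhs /= -nbhs_subspace_in //.
move=> /nbhs_ballP[e /= e_gt0 near_b].
pose d := Num.min (e / 2) (b - a).
have d_gt0 : 0 < d by rewrite lt_min divr_gt0 //= subr_gt0.
have d_le_e2 : d <= e / 2 by rewrite ge_min lexx.
have d_le_ba : d <= b - a by rewrite ge_min lexx orbT.
have xA : a <= b - d <= b by rewrite lerBDl -lerBDr d_le_ba gerBl ltW.
exists (b - d); first by rewrite lerBDl -lerBDr d_le_ba ltrBlDr ltrDl d_gt0.
apply: near_b xA; rewrite /ball /= opprB addrC subrK gtr0_norm //; lra.
Qed.

Section AdditiveGenerator.
Variables (R : realType) (t : R -> \bar R) (s : \bar R -> R).
Hypothesis t_ge0 : forall x : R, 0 <= x <= 1 -> (0 <= t x)%E.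
Hypothesis t_cont : {within [set x : R | 0 <= x <= 1], continuous t}.
Hypothesis t_incr :
  forall x y : R, 0 <= x <= 1 -> 0 <= y <= 1 -> x <= y -> (t x <= t y)%E.
Hypothesis s_incr : forall u v : \bar R,
  (0 <= u)%E -> (0 <= v)%E -> (u <= v)%E -> s u <= s v.

Local Notation G x y := (s (t x + t y)%E).
Hypothesis G_le1 : forall x y : R, 0 <= x <= 1 -> 0 <= y <= 1 -> G x y <= 1.
Hypothesis G_eq0 :
  forall x y : R, 0 <= x <= 1 -> 0 <= y <= 1 -> G x y = 0 <-> x = 0 /\ y = 0.
Hypothesis G_eq1 :
  forall x y : R, 0 <= x <= 1 -> 0 <= y <= 1 -> G x y = 1 <-> x = 1 \/ y = 1.

Let in01_0 : 0 <= (0 : R) <= 1. Proof. by rewrite lexx ler01. Qed.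
Let in01_1 : 0 <= (1 : R) <= 1. Proof. by rewrite lexx ler01. Qed.
Let half_ge0 : 0 <= 2^-1 :> R. Proof. by rewrite invr_ge0. Qed.
Let half_lt1 : 2^-1 < 1 :> R. Proof. by rewrite invf_lt1 ?ltr1n. Qed.
Let in01_half : 0 <= (2^-1 : R) <= 1. Proof. by rewrite half_ge0 ltW. Qed.

Let t_neqNy (x : R) : 0 <= x <= 1 -> t x != -oo%E.
Proof. by move=> x01; rewrite gt_eqF ?(lt_le_trans _ (t_ge0 x01)). Qed.

Let G00 : G 0 0 = 0. Proof. exact/(G_eq0 in01_0 in01_0). Qed.
Let G10 : G 1 0 = 1. Proof. by apply/(G_eq1 in01_1 in01_0); left. Qed.

Lemma G_lt1 (x y : R) : 0 <= x < 1 -> 0 <= y < 1 -> G x y < 1.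
Proof.
move=> /andP[x_ge0 x_lt1] /andP[y_ge0 y_lt1].
have x01 : 0 <= x <= 1 by rewrite x_ge0 ltW.
have y01 : 0 <= y <= 1 by rewrite y_ge0 ltW.
rewrite lt_neqAle G_le1 // andbT; apply/eqP => /(G_eq1 x01 y01).
by case=> [x1 | y1]; [move: x_lt1 | move: y_lt1]; rewrite ?x1 ?y1 ltxx.
Qed.

Lemma t0_fin_num : t 0 \is a fin_num.
Proof.
case t0E : (t 0) (t_ge0 in01_0) => [a||] // _.
have : G 0 0 = G 1 0 by rewrite t0E (addey (t_neqNy in01_1)).
by rewrite G00 G10 => /eqP; rewrite eq_sym oner_eq0.
Qed.

Lemma t0_lt_thalf : (t 0 < t 2^-1)%E.
Proof.
rewrite lt_neqAle t_incr ?andbT //.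
apply/negP => /eqP t0_thalf.
have : G 2^-1 0 = 0 by rewrite -t0_thalf.
by case/(G_eq0 in01_half in01_0) => /eqP; rewrite invr_eq0 pnatr_eq0.
Qed.

Lemma t1_eq_oo : t 1 = +oo%E.
Proof.
move/EFin_fin_numP: t0_fin_num => [a t0E].
case t1E : (t 1) (t_ge0 in01_1) (t_incr in01_half in01_1 (ltW half_lt1))
  => [r||] // _.
case thalfE : (t 2^-1) t0_lt_thalf => [b||]; rewrite ?t0E // lte_fin => a_lt_b _.
have c_lt_t1 : ((r + a - b)%:E < t 1)%E by rewrite t1E lte_fin; lra.
have [x /andP[x_ge0 x_lt1] c_lt_tx] :=
  continuous_within_itvcc_left ltr01 t_cont (open_ereal_gt' c_lt_t1).
have x01 : 0 <= x <= 1 by rewrite x_ge0 ltW.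
(* [t x + t 2^-1 >= t 1 + t 0], so [G x 2^-1 >= G 1 0 = 1] although [x, 2^-1 < 1]. *)
have : G x 2^-1 = 1.
  apply/le_anti; rewrite G_le1 //= -[leLHS]G10.
  apply: s_incr; rewrite ?adde_ge0 ?t_ge0 //.
  by rewrite t1E t0E thalfE -EFinD -(subrK b (r + a)) EFinD leeD2r // ltW.
by case/(G_eq1 x01 in01_half) => /eqP; rewrite lt_eqF.
Qed.

Lemma s_oo : s +oo%E = 1.
Proof. by move: G10; rewrite t1_eq_oo; move/EFin_fin_numP: t0_fin_num => [a ->]. Qed.

Lemma t_eq_oo (x : R) : 0 <= x <= 1 -> t x = +oo%E <-> x = 1.
Proof.
move=> x01; split=> [tx_oo | ->]; last exact: t1_eq_oo.
have : G x 0 = 1 by rewrite tx_oo addye ?s_oo ?t_neqNy.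
by case/(G_eq1 x01 in01_0) => // /eqP; rewrite eq_sym oner_eq0.
Qed.

Lemma s_eq1 (u : \bar R) : (0 <= u)%E -> s u = 1 <-> u = +oo%E.
Proof.
move=> u_ge0; split=> [su1 | ->]; last exact: s_oo.
case: u u_ge0 su1 => [c||] //= c_ge0 sc1.
have c_lt_t1 : (c%:E < t 1)%E by rewrite t1_eq_oo ltry.
have [x /andP[x_ge0 x_lt1] c_lt_tx] :=
  continuous_within_itvcc_left ltr01 t_cont (open_ereal_gt' c_lt_t1).
have x01 : 0 <= x <= 1 by rewrite x_ge0 ltW.
have : s c%:E <= G x 0.
  apply: s_incr => //; first by rewrite adde_ge0 ?t_ge0.
  by rewrite lee_paddr ?t_ge0 // ltW.
by rewrite sc1 leNgt G_lt1 ?x_ge0 ?ltr01 ?lexx.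
Qed.

End AdditiveGenerator.

Theorem theorem6p1 (R : realType) (t : R -> \bar R) (s : \bar R -> R)
  (t_range : forall x : R, 0 <= x <= 1 -> (0 <= t x)%E)
  (t_cont : {within [set x : R | 0 <= x <= 1], continuous t})
  (t_incr : forall x y : R, 0 <= x <= 1 -> 0 <= y <= 1 -> x <= y -> (t x <= t y)%E)
  (s_range : forall u : \bar R, (0 <= u)%E -> 0 <= s u <= 1)
  (s_cont : {within [set u : \bar R | (0 <= u)%E], continuous s})
  (s_incr : forall u v : \bar R, (0 <= u)%E -> (0 <= v)%E -> (u <= v)%E -> s u <= s v)
  (hG : grouping_function (fun x y : R => s (t x + t y)%E)) :
  (forall x : R, 0 <= x <= 1 -> (t x = +oo%E <-> x = 1)) /\
  (forall u : \bar R, (0 <= u)%E -> (s u = 1 <-> u = +oo%E)).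
Proof.
case: hG => G_range [_ [G_eq0 [G_eq1 _]]].
have G_le1 x y : 0 <= x <= 1 -> 0 <= y <= 1 -> s (t x + t y)%E <= 1.
  by move=> x01 y01; case/andP: (G_range x y x01 y01).
split=> [x | u].
  exact: (t_eq_oo t_range t_cont t_incr s_incr G_le1 G_eq0 G_eq1).
exact: (s_eq1 t_range t_cont t_incr s_incr G_le1 G_eq0 G_eq1).
Qed.
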